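(* Let $\mathbf{f} = (f_n)_{n\ge 1}$ be the ordinary paperfolding word over $\{0,1\}$ and let $\rho(n)$ be its abelian complexity function. Then for all integers $n\ge 0$ (with $n\ge1$ in the first relation) the following hold: \begin{align*} \rho(4n) &= \rho(2n),\\ \rho(4n+2) &= \rho(2n+1)+1,\\ \rho(16n+1) &= \rho(8n+1),\\ \rho(16n+c) &= \rho(2n+1)+2 \quad\text{for each } c\in\{3,7,9,13\},\\ \rho(16n+5) &= \rho(4n+1)+2,\\ \rho(16n+11) &= \rho(4n+3)+2,\\ \rho(16n+15) &= \rho(2n+2)+1. \end{align*}
   Context: The ordinary paperfolding word $\mathbf{f}=(f_n)_{n\ge1}$ over $\{0,1\}$ is defined as follows: for $n\ge 1$ write $n=n'2^k$ with $n'$ odd; then $f_n=0$ if $n'\equiv 1 \pmod 4$ and $f_n=1$ if $n'\equiv 3\pmod 4$. Thus $\mathbf{f}=0010011000110110\cdots$. A factor of $\mathbf{f}$ is a finite contiguous block $f_i f_{i+1}\cdots f_{i+n-1}$. Two words $u,v$ over $\{0,1\}$ are abelian equivalent if one is a rearrangement of the other. For $n\ge1$, the abelian complexity $\rho(n)$ is the number of abelian equivalence classes among the factors of $\mathbf{f}$ of length $n$. *)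

From mathcomp Require Import all_boot.
From mathcomp Require Import boolp.
Set Implicit Arguments. Unset Strict Implicit. Unset Printing Implicit Defensive.

Definition odd_part (n : nat) : nat := n %/ 2 ^ (logn 2 n).

(* ordinary paperfolding word, indexed from 1: f_n = 0 (false) if n' = 1 mod 4,
   f_n = 1 (true) if n' = 3 mod 4 *)
Definition pf (n : nat) : bool := odd_part n %% 4 == 3.

Definition factor (i n : nat) : n.-tuple bool := [tuple pf (i + j) | j < n].

Definition factors (n : nat) : {set n.-tuple bool} :=
  [set w : n.-tuple bool | `[< exists i, 1 <= i /\ w = factor i n >]].

Definition abelian_eq (n : nat) : rel (n.-tuple bool) :=
  fun u v => perm_eq (tval u) (tval v).

Definition rho (n : nat) : nat :=
  #|equivalence_partition (@abelian_eq n) (factors n)|.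

(* Let disc N be the number of 0s minus the number of 1s among f_1 ... f_N.  Twice
   the number of 1s in the factor of length n starting at a + 1 is
   n - (disc (a + n) - disc a); it moves by unit steps as a varies, and the
   reflection symmetry of the paperfolding word makes the range of
   disc (a + n) - disc a symmetric about 0, so rho n is one more than its maximum.
   Since disc (2z + b) = disc z + [odd z != b], that maximum is computed by a carry
   automaton reading a and n in binary.  Its value vectors fall, up to additive
   constants, into 12 patterns, so each identity of the theorem reduces to a finite
   check over the reachable patterns. *)

From mathcomp Require Import all_boot order ssralg ssrnum ssrint zify boolp.
Import Order.TTheory GRing.Theory Num.Theory.

Lemma odd_double_add (y : nat) (b : bool) : odd (2 * y + b) = b.
Proof. by rewrite oddD oddM; case: b. Qed.

Lemma pf_double (k : nat) : pf (2 * k) = pf k.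
Proof.
case: k => [|k] //; rewrite /pf /odd_part lognM // (_ : logn 2 2 = 1) //.
by rewrite add1n expnS divnMl.
Qed.

Lemma pf_double_add1 (k : nat) : pf (2 * k + 1) = odd k.
Proof.
rewrite /pf /odd_part lognE dvdn_addr ?dvdn_mulr // andbF expn0 divn1.
by case: (boolP (odd k)) => odd_k; apply/eqP; lia.
Qed.

Definition ones (N : nat) : nat := count pf (iota 1 N).

Lemma onesS (N : nat) : ones N.+1 = ones N + pf N.+1.
Proof. by rewrite /ones -[N.+1]addn1 iotaD count_cat /= addn0 [1 + N]addnC. Qed.

Lemma ones_double (z : nat) : ones (2 * z) = ones z + z./2.
Proof.
elim: z => [|z IH] //.
have -> : 2 * z.+1 = (2 * z).+2 by lia.
rewrite !onesS IH.
have -> : (2 * z).+1 = 2 * z + 1 by lia.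
have -> : (2 * z + 1).+1 = 2 * z.+1 by lia.
rewrite (pf_double_add1 z) pf_double; case: (boolP (odd z)) => odd_z /=; lia.
Qed.

Lemma ones_double_add1 (z : nat) : ones (2 * z + 1) = ones z + z.+1./2.
Proof.
rewrite addn1 onesS -[(2 * z).+1]addn1 pf_double_add1 ones_double.
by case: (boolP (odd z)) => odd_z /=; lia.
Qed.

Definition disc (N : nat) : int := (N%:Z - 2 * (ones N)%:Z)%R.

Lemma disc_double_add (z : nat) (b : bool) :
  disc (2 * z + b) = (disc z + (odd z != b)%:Z)%R.
Proof.
rewrite /disc; case: b; case: (boolP (odd z)) => odd_z /=;
  rewrite ?addn0 ?ones_double ?ones_double_add1; lia.
Qed.

Lemma factorE (i n : nat) : tval (factor i n) = map pf (iota i n).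
Proof.
by rewrite /factor /= -[in RHS](addn0 i) iotaDl -val_enum_ord -!map_comp.
Qed.

Lemma leq_card_imset_kernel (aT rT1 rT2 : finType) (f : aT -> rT1) (g : aT -> rT2)
    (D : {set aT}) :
  {in D &, forall x y, g x = g y -> f x = f y} -> #|f @: D| <= #|g @: D|.
Proof.
move=> gf; set FG := [set (f x, g x) | x in D].
have -> : f @: D = [set z.1 | z in FG] by rewrite -imset_comp.
have -> : g @: D = [set z.2 | z in FG] by rewrite -imset_comp.
rewrite (card_in_imset (f := snd)) ?leq_imset_card //.
move=> _ _ /imsetP[x Dx ->] /imsetP[y Dy ->] /= gxy.
by rewrite (gf x y Dx Dy gxy) gxy.
Qed.

Lemma card_imset_kernel (aT rT1 rT2 : finType) (f : aT -> rT1) (g : aT -> rT2)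
    (D : {set aT}) :
  {in D &, forall x y, (f x == f y) = (g x == g y)} -> #|f @: D| = #|g @: D|.
Proof.
move=> fg; apply/eqP; rewrite eqn_leq !leq_card_imset_kernel // => x y Dx Dy.
  by move/eqP; rewrite fg // => /eqP.
by move/eqP; rewrite -fg // => /eqP.
Qed.

Lemma card_equivalence_partition_kernel (T U : finType) (R : rel T) (D : {set T})
    (f : T -> U) :
  {in D &, forall x y, R x y = (f x == f y)} ->
  #|equivalence_partition R D| = #|f @: D|.
Proof.
move=> Rf; apply: card_imset_kernel => x y Dx Dy; apply/eqP/eqP => [Pxy | fxy].
  have : y \in [set z in D | R y z] by rewrite inE Dy Rf // eqxx.
  by rewrite -Pxy inE Dy Rf // => /andP[_ /eqP].
by apply/setP => z; rewrite !inE; case Dz: (z \in D); rewrite //= !Rf // fxy.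
Qed.

Lemma unit_step_ivt (F : nat -> nat) :
  (forall a, F a.+1 <= F a + 1 /\ F a <= F a.+1 + 1) ->
  forall a1 a2 j, F a1 <= j <= F a2 -> exists b, F b = j.
Proof.
move=> stepF.
have walk d a j : (F a <= j <= F (a + d)) || (F (a + d) <= j <= F a) -> exists b, F b = j.
  elim: d a => [|d IH] a Hj; first by exists a; move: Hj; rewrite addn0; lia.
  have [<-|Fa_neq] := eqVneq (F a) j; first by exists a.
  by apply: (IH a.+1); rewrite addSnnS; have := stepF a; lia.
move=> a1 a2 j Hj; have [le12|lt21] := leqP a1 a2.
  by apply: (walk (a2 - a1) a1); rewrite subnKC //; lia.
by apply: (walk (a1 - a2) a2); rewrite subnKC; [lia | exact: ltnW].
Qed.

Lemma count_bool (a : pred bool) (s : seq bool) :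
  count a s = a true * count id s + a false * (size s - count id s).
Proof.
elim: s => [|x s IH] /=; first by case: (a true); case: (a false).
have := count_size id s.
by rewrite IH; case: x; case: (a true); case: (a false) => /=; lia.
Qed.

Lemma abelian_eqE (n : nat) (u v : n.-tuple bool) :
  abelian_eq u v = (count id u == count id v).
Proof.
apply/permP/eqP => [/(_ id) // | cuv a].
by rewrite (count_bool a u) (count_bool a v) cuv !size_tuple.
Qed.

Lemma factorsP (n : nat) (w : n.-tuple bool) :
  reflect (exists a, w = factor a.+1 n) (w \in factors n).
Proof.
rewrite inE; apply: (iffP (asboolP _)) => [[i [i_gt0 ->]] | [a ->]].
  by exists i.-1; rewrite prednK.
by exists a.+1.
Qed.

Lemma count_factor (a n : nat) : count id (factor a.+1 n) + ones a = ones (a + n).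
Proof. by rewrite factorE count_map /ones iotaD count_cat addnC add1n. Qed.

Lemma count_factor_step (a n : nat) :
  count id (factor a.+2 n) <= count id (factor a.+1 n) + 1 /\
  count id (factor a.+1 n) <= count id (factor a.+2 n) + 1.
Proof.
have := count_factor a n; have := count_factor a.+1 n.
by rewrite addSn !onesS; case: (pf a.+1); case: (pf (a + n).+1) => /=; lia.
Qed.

Lemma rho_count_range (n lo P : nat) :
  (forall a, lo <= count id (factor a.+1 n) <= lo + P) ->
  (exists a, count id (factor a.+1 n) = lo) ->
  (exists a, count id (factor a.+1 n) = lo + P) -> rho n = P.+1.
Proof.
move=> range [a1 min_a1] [a2 max_a2].
pose key (w : n.-tuple bool) : 'I_P.+1 := inord (count id w - lo).
rewrite /rho (@card_equivalence_partition_kernel _ _ _ _ key); last first.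
  move=> _ _ /factorsP[a ->] /factorsP[b ->]; rewrite abelian_eqE.
  have := range a; have := range b => Ra Rb.
  apply/eqP/eqP => [cnt_eq | /(congr1 (@nat_of_ord _))]; first by rewrite /key cnt_eq.
  by rewrite !inordK; lia.
suff -> : key @: factors n = [set: 'I_P.+1] by rewrite cardsT card_ord.
apply/setP => j; rewrite inE; apply/imsetP.
have [b cnt_b] : exists b, count id (factor b.+1 n) = lo + j.
  apply: (@unit_step_ivt (fun a => count id (factor a.+1 n)) (count_factor_step ^~ n) a1 a2).
  by have := ltn_ord j; lia.
exists (factor b.+1 n); first by apply/factorsP; exists b.
by apply: val_inj; rewrite /key /= inordK cnt_b; have := ltn_ord j; lia.
Qed.

Definition excess (n a : nat) : int := (disc (a + n) - disc a)%R.

Lemma count_factor_excess (a n : nat) :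
  ((2 * count id (factor a.+1 n))%N%:Z = n%:Z - excess n a)%R.
Proof. by have := count_factor a n; rewrite /excess /disc; lia. Qed.

(* f_(2^(K+1) - j) = ~~ f_j for 0 < j < 2^(K+1). *)
Lemma disc_reflect (K x : nat) : x < 2 ^ K -> disc (2 ^ K.+1 - 1 - x) = (disc x + 1)%R.
Proof.
elim: K x => [|K IH] x x_lt; first by case: x x_lt.
have x_eq : x = 2 * x./2 + odd x by lia.
have hx_lt : x./2 < 2 ^ K by move: x_lt; rewrite expnS; lia.
have -> : 2 ^ K.+2 - 1 - x = 2 * (2 ^ K.+1 - 1 - x./2) + ~~ odd x.
  by move: x_lt; rewrite !expnS; case: (odd x) x_eq => /= x_eq; lia.
have odd_refl : odd (2 ^ K.+1 - 1 - x./2) = ~~ odd x./2.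
  have pos := expn_gt0 2 K.+1.
  by rewrite !oddB ?oddX ?subn_gt0 //; move: hx_lt; rewrite expnS; lia.
rewrite disc_double_add IH // odd_refl [in disc x]x_eq disc_double_add.
by case: (odd x./2); case: (odd x) => /=; lia.
Qed.

Lemma excess_opp (n a : nat) : exists a', excess n a' = (- excess n a)%R.
Proof.
set K := a + n; have K_lt : K < 2 ^ K by apply: ltn_expl.
exists (2 ^ K.+1 - 1 - K); rewrite /excess.
have -> : 2 ^ K.+1 - 1 - K + n = 2 ^ K.+1 - 1 - a by rewrite expnS /K in K_lt *; lia.
by rewrite !disc_reflect //; rewrite /K in K_lt *; lia.
Qed.

Lemma rho_excess_sup (n : nat) (P : int) :
  (forall a, (excess n a <= P)%R) -> (exists a, excess n a = P) -> ((rho n)%:Z = P + 1)%R.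
Proof.
move=> le_P [a1 exc_a1]; have [a2 exc_a2] := excess_opp n a1.
have P_ge0 : (0 <= P)%R by have := le_P a2; lia.
have count_a := count_factor_excess _ n.
rewrite (@rho_count_range n (count id (factor a1.+1 n)) `|P|%N).
- by lia.
- move=> a; have := count_a a; have := count_a a1; have := le_P a.
  have [a' exc_a'] := excess_opp n a; have := le_P a'; lia.
- by exists a1.
- by exists a2; have := count_a a2; have := count_a a1; lia.
Qed.

Definition vec := bool -> bool -> bool -> int.

Definition sum_bit (b r c : bool) : bool := b (+) r (+) c.
Definition carry_bit (b r c : bool) : bool := (b && r) || (c && (b || r)).

Lemma carry_bitE (b r c : bool) : b + r + c = 2 * carry_bit b r c + sum_bit b r c.
Proof. by case: b; case: r; case: c. Qed.

(* Reading x and m in binary from the low end, [gap m c p q] evolves as a carry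
   automaton on the states (c, p, q), c being the carry of x + m. *)
Definition gap (m : nat) (c p q : bool) (x : nat) : int :=
  (disc (2 * (x + m + c) + q) - disc (2 * x + p))%R.

Lemma gap_double_add (m : nat) (c p q : bool) (x : nat) (b : bool) :
  let s := sum_bit b (odd m) c in
  gap m c p q (2 * x + b) =
  ((q != s)%:Z - (p != b)%:Z + gap m./2 (carry_bit b (odd m) c) b s x)%R.
Proof.
move=> s; rewrite /gap; have := carry_bitE b (odd m) c; have := odd_double_half m.
move: (carry_bit _ _ _) @s => k s; rewrite -mul2n => m_eq bits.
have -> : 2 * x + b + m + c = 2 * (x + m./2 + k) + s by lia.
rewrite !disc_double_add !odd_double_add (eq_sym s q) (eq_sym b p); lia.
Qed.

(* [maxgap m] is the pointwise supremum over x of [gap m _ _ _ x]; [vbranch] is the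
   contribution of the choice b of the low bit of x. *)
Definition vbranch (r : bool) (v : vec) (c p q b : bool) : int :=
  let s := sum_bit b r c in ((q != s)%:Z - (p != b)%:Z + v (carry_bit b r c) b s)%R.

Definition vstep (r : bool) (v : vec) : vec :=
  fun c p q => Num.max (vbranch r v c p q false) (vbranch r v c p q true).

(* The supremum of disc (2 (x + c) + q) - disc (2 x + p), i.e. [maxgap 0]. *)
Definition vinit : vec := fun c p q => (if c then (if p == q then 2 else 1) else (p != q)%:Z)%R.

(* The first argument is fuel: m halvings always reach 0. *)
Fixpoint maxgap_iter (k m : nat) : vec :=
  if k is k'.+1 then (if m is 0 then vinit else vstep (odd m) (maxgap_iter k' m./2))
  else vinit.

Definition maxgap (m : nat) : vec := maxgap_iter m m.

Lemma vstep_vinit : vstep false vinit = vinit.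
Proof. by apply/funext => c; apply/funext => p; apply/funext => q; case: c p q => [] [] []. Qed.

Lemma maxgap_iter_stable (k1 k2 m : nat) :
  m <= k1 -> m <= k2 -> maxgap_iter k1 m = maxgap_iter k2 m.
Proof.
elim: k1 k2 m => [|k1 IH] [|k2] [|m] //= m_le1 m_le2; rewrite (IH k2) //; lia.
Qed.

Lemma maxgap_double_add (m : nat) (r : bool) : maxgap (2 * m + r) = vstep r (maxgap m).
Proof.
case E: (2 * m + r) => [|n].
  have -> : m = 0 by lia.
  have -> : r = false by case: r E => //; lia.
  by rewrite vstep_vinit.
rewrite /maxgap (_ : maxgap_iter n.+1 n.+1 = vstep (odd n.+1) (maxgap_iter n n.+1./2)) //.
rewrite -E odd_double_add (_ : (2 * m + r)./2 = m); last by case: r {E}; lia.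
congr vstep; apply: maxgap_iter_stable; lia.
Qed.

Lemma maxgapE (m : nat) : maxgap m = vstep (odd m) (maxgap m./2).
Proof. by rewrite -maxgap_double_add -[in LHS](odd_double_half m) addnC -mul2n. Qed.

Lemma gap_le_maxgap (m x : nat) (c p q : bool) : (gap m c p q x <= maxgap m c p q)%R.
Proof.
have [N] := ubnP (m + x); elim: N => // N IH in m x c p q *; rewrite ltnS => mx_le.
have [mx0 | mx_gt0] := posnP (m + x).
  have -> : m = 0 by lia.
  have -> : x = 0 by lia.
  by case: c; case: p; case: q; vm_compute.
rewrite -[x](odd_double_half x) addnC -mul2n gap_double_add maxgapE /vstep.
have := IH m./2 x./2 (carry_bit (odd x) (odd m) c) (odd x) (sum_bit (odd x) (odd m) c)
  ltac:(lia).
rewrite /vbranch; case: (odd x) => /= le_max; lia.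
Qed.

Lemma maxgap_attained (m : nat) (c p q : bool) : exists x, gap m c p q x = maxgap m c p q.
Proof.
elim/ltn_ind: m => m IH in c p q *.
have [-> | m_gt0] := posnP m.
  exists (if c then p && q else p).
  by case: c; case: p; case: q; vm_compute.
have [b max_b] : exists b, vstep (odd m) (maxgap m./2) c p q =
    vbranch (odd m) (maxgap m./2) c p q b.
  rewrite /vstep; case: leP => _; [by exists true | by exists false].
have [x gap_x] := IH m./2 ltac:(lia) (carry_bit b (odd m) c) b (sum_bit b (odd m) c).
exists (2 * x + b); by rewrite gap_double_add gap_x (maxgapE m) max_b.
Qed.

Lemma excess_gap (n x : nat) (b : bool) :
  excess n (2 * x + b) =
  gap n./2 (carry_bit b (odd n) false) b (sum_bit b (odd n) false) x.
Proof.
rewrite /excess /gap; have := carry_bitE b (odd n) false; have := odd_double_half n.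
move: (carry_bit _ _ _) (sum_bit _ _ _) => k s; rewrite -mul2n => n_eq bits.
by have -> : 2 * x + b + n = 2 * (x + n./2 + k) + s by lia.
Qed.

Definition vtop (r : bool) (v : vec) : int := Num.max (v false false r) (v r true (~~ r)).

Definition max_excess (n : nat) : int := vtop (odd n) (maxgap n./2).

Lemma rhoE (n : nat) : ((rho n)%:Z = max_excess n + 1)%R.
Proof.
apply: rho_excess_sup => [a | ].
  rewrite -[a](odd_double_half a) addnC -mul2n excess_gap /max_excess /vtop.
  have := gap_le_maxgap n./2 a./2 (carry_bit (odd a) (odd n) false) (odd a)
    (sum_bit (odd a) (odd n) false).
  by rewrite /carry_bit /sum_bit; case: (odd a); case: (odd n) => /=; lia.
rewrite /max_excess /vtop; case: leP => _.
  have [x gap_x] := maxgap_attained n./2 (odd n) true (~~ odd n).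
  by exists (2 * x + true); rewrite excess_gap -gap_x; case: (odd n).
have [x gap_x] := maxgap_attained n./2 false false (odd n).
by exists (2 * x + false); rewrite excess_gap -gap_x; case: (odd n).
Qed.

Definition vshift (k : int) (v : vec) : vec := fun c p q => (k + v c p q)%R.

Lemma vstep_shift (r : bool) (k : int) (v : vec) : vstep r (vshift k v) = vshift k (vstep r v).
Proof.
by apply/funext => c; apply/funext => p; apply/funext => q; rewrite /vstep /vbranch /vshift; lia.
Qed.

Lemma vshiftD (k1 k2 : int) (v : vec) : vshift k1 (vshift k2 v) = vshift (k1 + k2) v.
Proof. by apply/funext => c; apply/funext => p; apply/funext => q; rewrite /vshift addrA. Qed.

Lemma vtop_shift (r : bool) (k : int) (v : vec) : vtop r (vshift k v) = (k + vtop r v)%R.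
Proof. by rewrite /vtop /vshift; lia. Qed.

Definition veq (v w : vec) : bool :=
  all (fun c => all (fun p => all (fun q => v c p q == w c p q) [:: false; true])
    [:: false; true]) [:: false; true].

Lemma veqP (v w : vec) : reflect (v = w) (veq v w).
Proof.
have bitsP (b : bool) : b \in [:: false; true] by case: b.
apply: (iffP idP) => [vw | ->]; last by rewrite /veq /= !eqxx.
apply/funext => c; apply/funext => p; apply/funext => q; apply/eqP.
by move/allP/(_ c (bitsP c))/allP/(_ p (bitsP p))/allP/(_ q (bitsP q)): vw.
Qed.

(* Up to an additive constant every [maxgap m] is one of these vectors, entry
   4c + 2p + q being the value at (c, p, q); [pattern_next] and [pattern_offset]
   record how [vstep] acts on them. *)
Definition patterns : seq (seq int) := [::
  [:: 0; -1; -1; -2; -2; -1; -1; -2];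
  [:: 0; -1; -1;  0; -2; -1; -1; -2];
  [:: 0; -1; -1;  0;  0; -1;  1;  0];
  [:: 0; -1; -1;  0;  0;  1; -1;  0];
  [:: 0; -1; -1;  0;  0;  1;  1;  0];
  [:: 0; -1;  1;  0;  0; -1; -1;  0];
  [:: 0;  1; -1;  0;  0; -1; -1;  0];
  [:: 0;  1;  1;  0;  0; -1; -1;  0];
  [:: 0;  1;  1;  0;  0;  1;  1;  2];
  [:: 0;  1;  1;  0;  2;  1;  1;  0];
  [:: 0;  1;  1;  0;  2;  1;  1;  2];
  [:: 0;  1;  1;  2;  0;  1;  1;  0]]%R.

Definition pattern (i : nat) : vec :=
  fun c p q => nth 0%R (nth [::] patterns i) (4 * c + 2 * p + q).

Definition pattern_next (i : nat) (r : bool) : nat :=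
  nth 0 (if r then [:: 1; 1; 11; 4; 11; 4; 0; 0; 2; 3; 4; 1]
         else [:: 6; 7; 8; 7; 8; 7; 9; 9; 10; 10; 10; 5]) i.

Definition pattern_offset (i : nat) (r : bool) : int :=
  if (if r then 6 <= i else i == 11) then 2%R else 0%R.

Definition pattern_step_ok (i : nat) : bool :=
  veq (vstep false (pattern i)) (vshift (pattern_offset i false) (pattern (pattern_next i false)))
  && veq (vstep true (pattern i)) (vshift (pattern_offset i true) (pattern (pattern_next i true))).

Lemma maxgap_double_add_pattern (r : bool) {m i : nat} {k : int} :
  pattern_step_ok i -> maxgap m = vshift k (pattern i) ->
  maxgap (2 * m + r) = vshift (k + pattern_offset i r) (pattern (pattern_next i r)).
Proof.
move=> /andP[ok0 ok1] gap_m; rewrite maxgap_double_add gap_m vstep_shift -vshiftD.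
by case: r; [move/veqP: ok1 | move/veqP: ok0] => ->.
Qed.

(* The patterns of maxgap n and maxgap n.+1 with their relative shift; pairs are
   needed for the last identity, which compares 16n + 15 with 2(n + 1). *)
Definition pair_states : seq (nat * nat * int) := [::
  (0, 7, -2); (0, 8, -2); (1, 9, -2); (1, 10, -2); (2, 5, 0); (3, 6, 0); (4, 7, 0);
  (4, 8, 0); (4, 9, 0); (5, 1, 0); (6, 1, 0); (7, 1, 0); (7, 4, 0); (8, 11, 0);
  (9, 0, 2); (10, 2, 2); (10, 3, 2); (10, 4, 2); (11, 7, 0); (11, 9, 0); (11, 10, 0)]%R.

Definition pair_state_closed (t : nat * nat * int) : bool :=
  let: (i, j, e) := t in
  [&& pattern_step_ok i, pattern_step_ok j,
      (pattern_next i false, pattern_next i true,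
        pattern_offset i true - pattern_offset i false)%R \in pair_states &
      (pattern_next i true, pattern_next j false,
        e + pattern_offset j false - pattern_offset i true)%R \in pair_states].

Lemma pair_states_closed : all pair_state_closed pair_states.
Proof. by vm_compute. Qed.

Lemma maxgap_pair (n : nat) : exists i j e k, (i, j, e) \in pair_states /\
  maxgap n = vshift k (pattern i) /\ maxgap n.+1 = vshift (k + e)%R (pattern j).
Proof.
elim/ltn_ind: n => n IH; have [-> | n_gt0] := posnP n.
  by exists 10, 4, 2%R, 0%R; split; last by split; apply/veqP; vm_compute.
have [i [j [e [k [ije [gap_i gap_j]]]]]] := IH n./2 ltac:(lia).
have /and4P[ok_i ok_j even_ok odd_ok] := allP pair_states_closed _ ije.
rewrite -[n](odd_double_half n) addnC -mul2n; case: (odd n).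
  exists (pattern_next i true), (pattern_next j false),
    (e + pattern_offset j false - pattern_offset i true)%R, (k + pattern_offset i true)%R.
  split=> //; split; first exact: maxgap_double_add_pattern.
  rewrite (_ : (2 * n./2 + true).+1 = 2 * n./2.+1 + false); last by rewrite /=; lia.
  rewrite (maxgap_double_add_pattern false ok_j gap_j); congr vshift; lia.
exists (pattern_next i false), (pattern_next i true),
  (pattern_offset i true - pattern_offset i false)%R, (k + pattern_offset i false)%R.
split=> //; split; first exact: maxgap_double_add_pattern.
rewrite (_ : (2 * n./2 + false).+1 = 2 * n./2 + true); last by rewrite /=; lia.
rewrite (maxgap_double_add_pattern true ok_i gap_i); congr vshift; lia.
Qed.

Definition expand (n : nat) (bs : seq bool) : nat := foldl (fun m (b : bool) => 2 * m + b) n bs.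

Definition vchain (bs : seq bool) (v : vec) : vec := foldl (fun v r => vstep r v) v bs.

Lemma vchain_shift (bs : seq bool) (k : int) (v : vec) :
  vchain bs (vshift k v) = vshift k (vchain bs v).
Proof. by elim: bs v => [|r bs IH] v //=; rewrite vstep_shift IH. Qed.

Lemma max_excess_expand (n : nat) (bs : seq bool) (r : bool) :
  max_excess (2 * expand n bs + r) = vtop r (vchain bs (maxgap n)).
Proof.
rewrite /max_excess odd_double_add (_ : (2 * expand n bs + r)./2 = expand n bs); last first.
  by case: r; lia.
by congr vtop; elim: bs n => [|b bs IH] n //=; rewrite -maxgap_double_add; apply: IH.
Qed.

(* With [s = true] the right-hand side is taken at n.+1, whose pattern is j shifted
   by e. *)
Definition pattern_relation (s : bool) (bs1 : seq bool) (r1 : bool) (bs2 : seq bool) (r2 : bool)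
    (d : int) : bool :=
  all (fun t => let: (i, j, e) := t in
    vtop r1 (vchain bs1 (pattern i)) ==
    (if s then e else 0) + vtop r2 (vchain bs2 (pattern (if s then j else i))) + d)%R
  pair_states.

Lemma rho_expand (s : bool) (bs1 : seq bool) (r1 : bool) (bs2 : seq bool) (r2 : bool)
    (d n a b : nat) :
  pattern_relation s bs1 r1 bs2 r2 d%:Z ->
  a = 2 * expand n bs1 + r1 -> b = 2 * expand (n + s) bs2 + r2 -> rho a = rho b + d.
Proof.
move=> rel -> ->; have [i [j [e [k [ije [gap_i gap_j]]]]]] := maxgap_pair n.
have /eqP := allP rel _ ije.
have := rhoE (2 * expand n bs1 + r1); have := rhoE (2 * expand (n + s) bs2 + r2).
rewrite !max_excess_expand; case: s {rel} => /=; rewrite ?addn0 ?addn1 ?gap_j gap_i;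
  rewrite !vchain_shift !vtop_shift; lia.
Qed.

Ltac solve_relation := by [rewrite /expand /=; lia | vm_compute].

Theorem theorem2 (n : nat) :
  (1 <= n -> rho (4 * n) = rho (2 * n)) /\
  rho (4 * n + 2) = rho (2 * n + 1) + 1 /\
  rho (16 * n + 1) = rho (8 * n + 1) /\
  (forall c, c \in [:: 3; 7; 9; 13] -> rho (16 * n + c) = rho (2 * n + 1) + 2) /\
  rho (16 * n + 5) = rho (4 * n + 1) + 2 /\
  rho (16 * n + 11) = rho (4 * n + 3) + 2 /\
  rho (16 * n + 15) = rho (2 * n + 2) + 1.
Proof.
split.
  move=> _; rewrite -[RHS]addn0.
  apply: (rho_expand false [:: false] false [::] false 0 n); solve_relation.
split.
  apply: (rho_expand false [:: true] false [::] true 1 n); solve_relation.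
split.
  rewrite -[RHS]addn0.
  apply: (rho_expand false [:: false; false; false] true [:: false; false] true 0 n);
    solve_relation.
split.
  move=> c; rewrite !inE => /or4P[] /eqP ->.
  - apply: (rho_expand false [:: false; false; true] true [::] true 2 n); solve_relation.
  - apply: (rho_expand false [:: false; true; true] true [::] true 2 n); solve_relation.
  - apply: (rho_expand false [:: true; false; false] true [::] true 2 n); solve_relation.
  - apply: (rho_expand false [:: true; true; false] true [::] true 2 n); solve_relation.
split.
  apply: (rho_expand false [:: false; true; false] true [:: false] true 2 n); solve_relation.
split.
  apply: (rho_expand false [:: true; false; true] true [:: true] true 2 n); solve_relation.
apply: (rho_expand true [:: true; true; true] true [::] false 1 n); solve_relation.
Qed.
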